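(* Let $G$ be a cyclic group of order $p^a$, where $p$ is an odd prime and $a \geq 1$. Then the power graph $\mathscr{G}(G)$ is overfull.
   Context: For a finite group $G$, the power graph $\mathscr{G}(G)$ is the simple graph with vertex set the elements of $G$, in which two distinct elements $a,b$ are adjacent if and only if one is a power of the other. For a finite simple graph $\Gamma$ on $n$ vertices with maximum vertex degree $\Delta(\Gamma)$, $\Gamma$ is called overfull if $|E(\Gamma)| / \lfloor n/2 \rfloor > \Delta(\Gamma)$. *)

From mathcomp Require Import all_boot all_order all_algebra all_fingroup.
Set Implicit Arguments. Unset Strict Implicit. Unset Printing Implicit Defensive.

Definition pg_adj (gT : finGroupType) (a b : gT) : bool :=
  (a != b) && ((a \in <[b]>%g) || (b \in <[a]>%g)).

Definition pg_edges (gT : finGroupType) (G : {group gT}) : {set {set gT}} :=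
  [set [set a; b] | a in G, b in G & pg_adj a b].

Definition pg_deg (gT : finGroupType) (G : {group gT}) (v : gT) : nat :=
  #|[set u in G | pg_adj u v]|.

Definition pg_maxdeg (gT : finGroupType) (G : {group gT}) : nat :=
  \max_(v in G) pg_deg G v.

Definition pg_overfull (gT : finGroupType) (G : {group gT}) : Prop :=
  ((pg_maxdeg G)%:R < (#|pg_edges G|)%:R / ((#|G|)./2)%:R :> rat)%R.

From mathcomp Require Import all_boot all_order all_algebra all_fingroup all_solvable.
Set Implicit Arguments. Unset Strict Implicit. Unset Printing Implicit Defensive.

(* In a cyclic group an element lies in <[y]> exactly when its order divides
   #[y]; in a p-group element orders are powers of p, hence totally ordered by
   divisibility. So the power graph of a cyclic p-group is complete. A complete
   graph K_n with n odd has n(n-1)/2 edges, maximum degree n - 1 and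
   floor(n/2) = (n-1)/2, so |E| / floor(n/2) = n > n - 1. *)

Lemma pnat_dvdn_total (p m n : nat) :
  p.-nat m -> p.-nat n -> (m %| n) || (n %| m).
Proof.
move=> /p_natP[i ->] /p_natP[j ->].
by case: (leqP i j) => [ij | /ltnW ji]; apply/orP; [left | right]; exact: dvdn_exp2l.
Qed.

Lemma mem_cycle_cyclic (gT : finGroupType) (G : {group gT}) (x y : gT) :
  cyclic G -> x \in G -> y \in G -> (x \in <[y]>%g) = (#[x]%g %| #[y]%g).
Proof.
by move=> cG xG yG; rewrite -cycle_subG -(cardSg_cyclic cG) ?cycle_subG.
Qed.

Lemma cyclic_pgroup_mem_cycle_total (gT : finGroupType) (G : {group gT}) (p : nat) :
  cyclic G -> (p.-group G)%g ->
  {in G &, forall x y, (x \in <[y]>%g) || (y \in <[x]>%g)}.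
Proof.
move=> cG pG x y xG yG; rewrite !(mem_cycle_cyclic cG) //.
exact: pnat_dvdn_total (mem_p_elt pG xG) (mem_p_elt pG yG).
Qed.

Section PowerGraph.

Variables (gT : finGroupType) (G : {group gT}).

Lemma pg_deg_lt_card (v : gT) : v \in G -> pg_deg G v < #|G|.
Proof.
move=> vG; apply: proper_card; apply/properP; split.
  by apply/subsetP=> u; rewrite inE => /andP[].
by exists v; rewrite // inE /pg_adj eqxx andbF.
Qed.

Lemma pg_maxdeg_le_pred : pg_maxdeg G <= #|G|.-1.
Proof.
by apply/bigmax_leqP=> v vG; rewrite -ltnS prednK ?pg_deg_lt_card // (cardD1 v) vG.
Qed.

Definition pg_complete : Prop := {in G &, forall x y, x != y -> pg_adj x y}.

Lemma pg_edges_complete :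
  pg_complete -> pg_edges G = [set B : {set gT} | B \subset G & #|B| == 2].
Proof.
move=> complG; apply/setP=> B; rewrite inE; apply/imset2P/andP => [[x y xG] | [sBG]].
  rewrite inE => /andP[yG /andP[xy _]] ->.
  by rewrite subUset !sub1set xG yG cards2 xy.
case/cards2P=> [x [y [xy defB]]]; rewrite defB subUset !sub1set in sBG *.
case/andP: sBG => xG yG; exists x y => //.
by rewrite inE yG complG.
Qed.

Lemma card_pg_edges_complete : pg_complete -> #|pg_edges G| = 'C(#|G|, 2).
Proof. by move/pg_edges_complete->; rewrite cards_draws. Qed.

End PowerGraph.

Lemma pred_mul_half_lt_bin2 (n : nat) : odd n -> 1 < n -> n.-1 * n./2 < 'C(n, 2).
Proof.
move=> odd_n n_gt1; have halfn_gt0 : 0 < n./2 by rewrite half_gt0.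
rewrite bin2odd // -(odd_halfK odd_n) doubleK ltn_pmul2r // odd_halfK //.
by rewrite prednK // ltnW.
Qed.

Lemma pg_overfull_complete_odd (gT : finGroupType) (G : {group gT}) :
  pg_complete G -> odd #|G| -> 1 < #|G| -> pg_overfull G.
Proof.
move=> complG odd_n n_gt1; rewrite /pg_overfull card_pg_edges_complete //.
rewrite Num.Theory.ltr_pdivlMr ?Num.Theory.ltr0n ?half_gt0 //.
rewrite -GRing.natrM Num.Theory.ltr_nat.
apply: leq_ltn_trans (pred_mul_half_lt_bin2 odd_n n_gt1).
by rewrite leq_mul2r pg_maxdeg_le_pred orbT.
Qed.

Theorem mainTheorem6 (gT : finGroupType) (G : {group gT}) (p a : nat) :
  prime p -> odd p -> 1 <= a -> cyclic G -> #|G| = p ^ a ->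
  pg_overfull G.
Proof.
move=> p_pr odd_p a_gt0 cG oG.
have pG : (p.-group G)%g by rewrite /pgroup oG pnatX pnat_id.
have complG : pg_complete G.
  move=> x y xG yG xy; rewrite /pg_adj xy.
  exact: cyclic_pgroup_mem_cycle_total cG pG x y xG yG.
apply: pg_overfull_complete_odd => //; first by rewrite oG oddX odd_p orbT.
by rewrite oG -(exp1n a) ltn_exp2r ?prime_gt1.
Qed.
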